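(* Let $A = [0,\mathfrak{c})$, $B = [0,\omega)$, $Y = A \times B$, $p \notin Y$, and $X = Y \cup A \cup \{p\}$, topologized so that: every point of $Y$ is isolated; each $\alpha \in A$ has basic neighborhoods $\{\alpha\} \cup \{\langle \alpha, m\rangle : m > n\}$, $n \in \omega$; and $p$ has basic neighborhoods $\{p\} \cup \{\langle\alpha,n\rangle : \alpha \in A\setminus F,\ n \in \omega\}$ for countable $F \subset A$. Then $X$ is a Hausdorff star Hurewicz space which is not set star Hurewicz.
   Context: $\mathfrak{c}$ denotes the cardinality of the continuum. For a subset $S$ of a space $X$ and a collection $\mathcal{U}$ of subsets of $X$, ${\rm St}(S,\mathcal{U}) = \bigcup\{U \in \mathcal{U}: U \cap S \neq \emptyset\}$. $X$ is star Hurewicz if for each sequence $(\mathcal{U}_n: n\in\mathbb{N})$ of open covers of $X$ there are finite $\mathcal{V}_n \subset \mathcal{U}_n$ such that each $x\in X$ lies in ${\rm St}(\bigcup\mathcal{V}_n,\mathcal{U}_n)$ for all but finitely many $n$. $X$ is set star Hurewicz if for each nonempty $S \subset X$ and each sequence $(\mathcal{U}_n: n\in\mathbb{N})$ of collections of sets open in $X$ with $\overline{S} \subset \bigcup\mathcal{U}_n$ for all $n$, there are finite $\mathcal{V}_n \subset \mathcal{U}_n$ such that each $x \in S$ lies in ${\rm St}(\bigcup\mathcal{V}_n,\mathcal{U}_n)$ for all but finitely many $n$. *)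

From HB Require Import structures.
From mathcomp Require Import all_boot all_order.
From mathcomp Require Import boolp classical_sets functions cardinality topology.

Set Implicit Arguments. Unset Strict Implicit. Unset Printing Implicit Defensive.
Local Open Scope classical_set_scope.

Definition St (T : Type) (S : set T) (U : set (set T)) : set T :=
  \bigcup_(W in [set W | U W /\ W `&` S !=set0]) W.

Definition open_cover (T : topologicalType) (U : set (set T)) : Prop :=
  (forall W, U W -> open W) /\ \bigcup_(W in U) W = setT.

Definition star_Hurewicz (T : topologicalType) : Prop :=
  forall Us : nat -> set (set T), (forall n, open_cover (Us n)) ->
  exists Vs : nat -> set (set T),
    (forall n, finite_set (Vs n) /\ Vs n `<=` Us n) /\
    (forall x : T, exists N, forall n, (N <= n)%N ->
        St (\bigcup_(W in Vs n) W) (Us n) x).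

Definition set_star_Hurewicz (T : topologicalType) : Prop :=
  forall (S : set T), S !=set0 ->
  forall Us : nat -> set (set T),
    (forall n, (forall W, Us n W -> open W) /\ closure S `<=` \bigcup_(W in Us n) W) ->
  exists Vs : nat -> set (set T),
    (forall n, finite_set (Vs n) /\ Vs n `<=` Us n) /\
    (forall x : T, S x -> exists N, forall n, (N <= n)%N ->
        St (\bigcup_(W in Vs n) W) (Us n) x).

(* A = [0, c): any set of cardinality continuum; we take set nat (|P(w)| = c). *)
Definition Aset := set nat.

Inductive Xpt : Type :=
  | Ypt : Aset -> nat -> Xpt
  | Apt : Aset -> Xpt
  | Ppt : Xpt.

Definition basicA (a : Aset) (n : nat) : set Xpt :=
  [set x | x = Apt a \/ exists m, (n < m)%N /\ x = Ypt a m].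

Definition basicP (F : set Aset) : set Xpt :=
  [set x | x = Ppt \/ exists a n, ~ F a /\ x = Ypt a n].

Definition Xopen (U : set Xpt) : Prop :=
  forall x, U x ->
    match x with
    | Ypt _ _ => True
    | Apt a => exists n, basicA a n `<=` U
    | Ppt => exists F, countable F /\ basicP F `<=` U
    end.

Lemma XopenT : Xopen setT.
Proof.
case=> [a n|a|] _ //; first by exists 0%N.
by exists set0; split; [exact: countable0|].
Qed.

Lemma XopenI : setI_closed Xopen.
Proof.
move=> U V hU hV [a n|a|] [Ux Vx] //.
- have [n1 h1] := hU _ Ux; have [n2 h2] := hV _ Vx.
  exists (maxn n1 n2) => x [->|[m [lm ->]]]; split.
  + by apply: h1; left.
  + by apply: h2; left.
  + by apply: h1; right; exists m; split => //; apply: leq_ltn_trans lm; exact: leq_maxl.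
  + by apply: h2; right; exists m; split => //; apply: leq_ltn_trans lm; exact: leq_maxr.
- have [F1 [c1 h1]] := hU _ Ux; have [F2 [c2 h2]] := hV _ Vx.
  have cU : countable (F1 `|` F2).
    have -> : F1 `|` F2 = \bigcup_(b in [set: bool]) (if b then F1 else F2).
      apply/seteqP; split => x.
      + by case=> h; [exists true | exists false].
      + by case=> -[] _ h; [left | right].
    apply: bigcup_countable; first exact: countableP.
    by case.
  exists (F1 `|` F2); split; first exact: cU.
  move=> x [->|[a [n [nF ->]]]]; split.
  + by apply: h1; left.
  + by apply: h2; left.
  + by apply: h1; right; exists a, n; split => // ?; apply: nF; left.
  + by apply: h2; right; exists a, n; split => // ?; apply: nF; right.
Qed.

Lemma Xopen_bigU (I : Type) (f : I -> set Xpt) :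
  (forall i, Xopen (f i)) -> Xopen (\bigcup_i f i).
Proof.
move=> hf [a n|a|] [i _ fx] //.
- have [m hm] := hf i _ fx; exists m => y /hm fy; by exists i.
- have [F [cF hF]] := hf i _ fx; exists F; split => // y /hF fy; by exists i.
Qed.

HB.instance Definition _ := gen_eqMixin Xpt.
HB.instance Definition _ := gen_choiceMixin Xpt.
HB.instance Definition _ := isOpenTopological.Build Xpt XopenT XopenI Xopen_bigU.

Definition X : topologicalType := Xpt.

From mathcomp Require Import all_boot all_order.
From mathcomp Require Import boolp classical_sets functions cardinality topology.

(* - Hausdorff: for x <> y we exhibit basic open neighbourhoods of x and y
     which are disjoint (Y-points are isolated, A-points have vertical
     "columns", p has a neighbourhood omitting one column).
   - Not set star Hurewicz: take S = A (a closed set) and the covers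
     U_n = {basicA a n : a in A}.  The members of U_n are pairwise disjoint,
     so St(V, U_n) meets A only in the indices of V; finite V_n therefore
     see only countably many a in total, and A is uncountable (Cantor).
   - Star Hurewicz: the member of U_n containing p contains basicP F_n for a
     countable F_n.  Enumerating the countable set of all indices in the F_n
     by e : nat -> A, the n-th finite family consists of the members of U_n
     chosen at p and at the points Apt (e k), Ypt (e k) m with k, m <= n.
     Points indexed by some e k are eventually among these points; all
     other points of Y lie in the member chosen at p, and so does some
     point of every neighbourhood of an A-point outside the enumeration. *)

Set Implicit Arguments. Unset Strict Implicit. Unset Printing Implicit Defensive.
Local Open Scope classical_set_scope.

Lemma StP (T : Type) (S : set T) (U : set (set T)) (W : set T) (x : T) :
  U W -> W x -> W `&` S !=set0 -> St S U x.
Proof. by move=> UW Wx WS; exists W. Qed.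

Lemma cover_selector (T : Type) (Us : nat -> set (set T)) :
  (forall n, \bigcup_(W in Us n) W = setT) ->
  exists sel : nat -> T -> set T, forall n x, Us n (sel n x) /\ sel n x x.
Proof.
move=> cover.
have /choice [f hf] : forall nx : nat * T, exists W, Us nx.1 W /\ W nx.2.
  move=> [n x]; have : (\bigcup_(W in Us n) W) x by rewrite cover.
  by case=> W UW Wx; exists W.
by exists (fun n x => f (n, x)) => n x; exact: (hf (n, x)).
Qed.

Lemma cantor (T : pointedType) : ~ ([set: set T] #<= [set: T])%card.
Proof.
move=> /pcard_injP [f finj].
have injf A B : f A = f B -> A = B by move=> e; apply: finj; rewrite ?in_setE.
pose D := [set t | exists B, f B = t /\ ~ B t].
have [hD|nD] := pselect (D (f D)).
  by have [B [eB nB]] := hD; apply: nB; rewrite (injf _ _ eB).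
exact: nD (ex_intro _ D (conj erefl nD)).
Qed.

Lemma countable_miss (C : set (set nat)) : countable C -> exists a, ~ C a.
Proof.
move=> cC; apply: contrapT => hall; apply: (@cantor nat).
apply: card_le_trans cC; apply: subset_card_le => a _.
by apply: contrapT => Ca; apply: hall; exists a.
Qed.

Lemma countable_enum (T : pointedType) (C : set T) :
  countable C -> exists e : nat -> T, C `<=` range e.
Proof. by move=> /pcard_surjP [e surj]; exists e. Qed.

Lemma basicA_open a n : open (basicA a n : set X).
Proof. by change (Xopen (basicA a n)) => x [->|[m [_ ->]]] //; exists n. Qed.

Lemma basicP_open F : countable F -> open (basicP F : set X).
Proof. by move=> cF; change (Xopen (basicP F)) => x [->|[a [m [_ ->]]]] //; exists F; split. Qed.

Lemma Ypt_open a m : open ([set Ypt a m] : set X).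
Proof. by change (Xopen [set Ypt a m]) => x ->. Qed.

Definition sep_nbhd (x y : X) : set X :=
  match x with
  | Ypt a m => [set Ypt a m]
  | Apt a => basicA a (if y is Ypt _ m then m else 0%N)
  | Ppt => basicP (match y with Ypt b _ | Apt b => [set b] | Ppt => set0 end)
  end.

Lemma sep_nbhd_open_nbhs (x y : X) : open_nbhs x (sep_nbhd x y).
Proof.
split; last by case: x => [a m|a|] /=; [|left|left].
case: x => [a m|a|] /=; [exact: Ypt_open|exact: basicA_open|].
by apply: basicP_open; case: y => [b _|b|]; [exact: countable1|exact: countable1|].
Qed.

Lemma sep_nbhd_disjoint (x y z : X) :
  x <> y -> sep_nbhd x y z -> sep_nbhd y x z -> False.
Proof.
case: x => [a m|a|]; case: y => [b k|b|] //= nxy; rewrite /basicA /basicP /=.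
- by move=> -> ?; apply: nxy.
- by move=> -> [//|[j [lj [_ ej]]]]; rewrite ej ltnn in lj.
- by move=> -> [//|[c [j [h [ec _]]]]]; apply: h; rewrite ec.
- by move=> [->//|[j [lj ->]]] [_ ej]; rewrite ej ltnn in lj.
- move=> [->|[j [_ ->]]].
    by move=> [[e]|[j' [_ ?]]] //; apply: nxy; rewrite e.
  by move=> [//|[j' [_ [e _]]]]; apply: nxy; rewrite e.
- move=> [->|[j [_ ->]]]; first by move=> [//|[c [j' [h ?]]]].
  by move=> [//|[c [j' [h [ec _]]]]]; apply: h; rewrite ec.
- by move=> [->//|[c [j [h ->]]]] [ec _]; apply: h; rewrite ec.
- move=> [->|[c [j [h ->]]]]; first by move=> [//|[j' [_ ?]]].
  by move=> [//|[j' [_ [ec _]]]]; apply: h; rewrite ec.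
Qed.

Lemma X_hausdorff : hausdorff_space X.
Proof.
move=> x y clxy; apply: contrapT => nxy.
have [z [zx zy]] := clxy _ _ (open_nbhs_nbhs (sep_nbhd_open_nbhs x y))
                           (open_nbhs_nbhs (sep_nbhd_open_nbhs y x)).
exact: sep_nbhd_disjoint nxy zx zy.
Qed.

Definition Apts : set X := range Apt.

Definition columns (n : nat) : set (set X) := [set basicA a n | a in setT].

(* The set A is closed: p and the Y-points have neighbourhoods missing it. *)
Lemma closure_Apts : closure Apts `<=` Apts.
Proof.
case=> [a m|a|] clx.
- by have [_ [[b _ <-]]] := clx _ (open_nbhs_nbhs (conj (@Ypt_open a m) erefl)).
- by exists a.
- have pnbhs := open_nbhs_nbhs (conj (basicP_open (countable0 Aset)) (or_introl erefl)).
  by have [_ [[b _ <-] [//|[c [j [_ ?]]]]]] := clx _ pnbhs.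
Qed.

Lemma basicA_Apt a b n : basicA a n (Apt b) -> b = a.
Proof. by case=> [[]|[j [_ ?]]]. Qed.

Lemma basicA_meet a b n : basicA a n `&` basicA b n !=set0 -> a = b.
Proof.
move=> [z [[->|[j [_ ->]]] hb]]; first by rewrite (basicA_Apt hb).
by case: hb => [//|[j' [_ [->]]]].
Qed.

Lemma St_columns n (V : set (set X)) a :
  V `<=` columns n -> St (\bigcup_(W in V) W) (columns n) (Apt a) ->
  V (basicA a n).
Proof.
move=> Vcol [_ [[b _ <-] [z [zb [W VW Wz]]]] /basicA_Apt ba]; subst b.
have [c _ eW] := Vcol _ VW; subst W.
by rewrite (@basicA_meet a c n) //; exists z.
Qed.

Lemma finite_columns_countable n (V : set (set X)) :
  finite_set V -> countable [set a | V (basicA a n)].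
Proof.
move=> finV.
have inj : {in [set a | V (basicA a n)] &, injective (fun a => basicA a n)}.
  by move=> a b _ _ e; apply: (@basicA_Apt b a n); rewrite -e; left.
rewrite -(eq_countable (inj_card_eq inj)).
apply: sub_countable (finite_set_countable finV).
by apply: subset_card_le => W [a Va <-].
Qed.

Lemma X_not_set_star_Hurewicz : ~ set_star_Hurewicz X.
Proof.
move=> ssh.
have covers n : (forall W, columns n W -> open W) /\
                closure Apts `<=` \bigcup_(W in columns n) W.
  split; first by move=> W [a _ <-]; exact: basicA_open.
  by move=> x /closure_Apts [a _ <-]; exists (basicA a n); [exists a|left].
have Apts0 : Apts !=set0 by exists (Apt set0), set0.
have [Vs [finV starV]] := ssh Apts Apts0 _ covers.
have cseen : countable (\bigcup_(n in setT) [set a | Vs n (basicA a n)]).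
  by apply: bigcup_countable => // n _; exact: finite_columns_countable (proj1 (finV n)).
have [a unseen] := countable_miss cseen.
have [N hN] := starV (Apt a) (ex_intro2 _ _ a I erefl).
apply: unseen; exists N => //.
exact: St_columns (proj2 (finV N)) (hN N (leqnn N)).
Qed.

Section StarHurewicz.
Variable Us : nat -> set (set X).
Hypothesis Us_open : forall n W, Us n W -> open W.
Variable sel : nat -> X -> set X.
Hypothesis sel_cover : forall n x, Us n (sel n x) /\ sel n x x.
Variable F : nat -> set Aset.
Hypothesis basicP_sel : forall n, basicP (F n) `<=` sel n Ppt.
Variable e : nat -> Aset.
Hypothesis e_enum : forall n, F n `<=` range e.

Definition grid (n : nat) : set X :=
  [set Ppt] `|` (Apt \o e) @` `I_n.+1 `|`
  (fun km : nat * nat => Ypt (e km.1) km.2) @` (`I_n.+1 `*` `I_n.+1).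

Definition chosen (n : nat) : set (set X) := sel n @` grid n.

Lemma chosen_finite n : finite_set (chosen n).
Proof.
apply: finite_image; rewrite !finite_setU; split; [split|].
- exact: finite_set1.
- exact/finite_image/finite_II.
- by apply/finite_image/finite_setX; exact: finite_II.
Qed.

Lemma chosen_sub n : chosen n `<=` Us n.
Proof. by move=> W [y _ <-]; exact: (proj1 (sel_cover n y)). Qed.

Lemma St_chosen n y x :
  grid n y -> sel n y x -> St (\bigcup_(W in chosen n) W) (Us n) x.
Proof.
move=> gy sx; apply: (StP (W := sel n y)) => //.
  exact: (proj1 (sel_cover n y)).
by exists x; split => //; exists (sel n y) => //; exists y.
Qed.

Lemma St_grid n x : grid n x -> St (\bigcup_(W in chosen n) W) (Us n) x.
Proof. by move=> gx; apply: (St_chosen gx); exact: (proj2 (sel_cover n x)). Qed.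

Lemma unenumerated_sel a m n : ~ range e a -> sel n Ppt (Ypt a m).
Proof. by move=> ne; apply: basicP_sel; right; exists a, m; split => // /e_enum. Qed.

Lemma grid_Ppt n : grid n Ppt.
Proof. by left; left. Qed.

Lemma grid_Apt k n : (k <= n)%N -> grid n (Apt (e k)).
Proof. by move=> kn; left; right; exists k. Qed.

Lemma grid_Ypt k m n : (k <= n)%N -> (m <= n)%N -> grid n (Ypt (e k) m).
Proof. by move=> kn mn; right; exists (k, m). Qed.

(* An A-point outside the enumeration is in every star: its chosen
   neighbourhood contains a tail of its column, which meets the member
   chosen at p. *)
Lemma St_unenumerated_Apt a n :
  ~ range e a -> St (\bigcup_(W in chosen n) W) (Us n) (Apt a).
Proof.
move=> ne; have [UW Wa] := sel_cover n (Apt a).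
have [j colW] := Us_open UW Wa.
apply: (StP UW Wa); exists (Ypt a j.+1); split; first by apply: colW; right; exists j.+1.
by exists (sel n Ppt); [exists Ppt; first exact: grid_Ppt | exact: unenumerated_sel].
Qed.

Lemma star_Hurewicz_chosen (x : X) :
  exists N, forall n, (N <= n)%N -> St (\bigcup_(W in chosen n) W) (Us n) x.
Proof.
case: x => [a m|a|]; last by exists 0%N => n _; exact/St_grid/grid_Ppt.
- have [[k _ <-]|ne] := pselect (range e a).
    exists (maxn k m) => n; rewrite geq_max => /andP [kn mn].
    exact/St_grid/grid_Ypt.
  by exists 0%N => n _; exact/(St_chosen (grid_Ppt n))/unenumerated_sel.
- have [[k _ <-]|ne] := pselect (range e a).
    by exists k => n kn; exact/St_grid/grid_Apt.
  by exists 0%N => n _; exact: St_unenumerated_Apt.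
Qed.

End StarHurewicz.

Lemma X_star_Hurewicz : star_Hurewicz X.
Proof.
move=> Us covers.
have [sel hsel] := cover_selector (fun n => proj2 (covers n)).
have /choice [F hF] : forall n, exists F : set Aset,
    countable F /\ basicP F `<=` sel n Ppt.
  by move=> n; have [U_sel selP] := hsel n Ppt; exact: (proj1 (covers n) _ U_sel _ selP).
have [e he] : exists e : nat -> Aset, \bigcup_(n in setT) F n `<=` range e.
  by apply: countable_enum; apply: bigcup_countable => // n _; exact: (proj1 (hF n)).
have e_enum n : F n `<=` range e by move=> a Fa; apply: he; exists n.
have Us_open n : forall W, Us n W -> open W := proj1 (covers n).
exists (chosen sel e); split.
  by move=> n; split; [exact: chosen_finite | exact: chosen_sub].
move=> x; exact: (star_Hurewicz_chosen Us_open hsel (fun n => proj2 (hF n)) e_enum x).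
Qed.

Theorem mainTheorem15 :
  hausdorff_space X /\ star_Hurewicz X /\ ~ set_star_Hurewicz X.
Proof.
split; first exact: X_hausdorff.
by split; [exact: X_star_Hurewicz | exact: X_not_set_star_Hurewicz].
Qed.
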